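(* For every integer $n>2$ there exists a finite Blaschke product $B$ of degree $n$ with $M(B)\le n+1$ and $m(B)<n-1$.
   Context: A finite Blaschke product of degree $n$ is $B(z)=\alpha\prod_{k=1}^n \frac{z-a_k}{1-\overline{a_k}z}$ with $a_k\in\mathbb D=\{|z|<1\}$, $\alpha\in\mathbb T=\{|z|=1\}$; $M(B)=\sup_{|z|=1}|B'(z)|$, $m(B)=\inf_{|z|=1}|B'(z)|$. *)

From HB Require Import structures.
From mathcomp Require Import all_boot all_order all_algebra.
From mathcomp Require Import complex.
From mathcomp Require Import reals.
Set Implicit Arguments. Unset Strict Implicit. Unset Printing Implicit Defensive.
Import Order.TTheory GRing.Theory Num.Theory.
Local Open Scope ring_scope.
Local Open Scope complex_scope.

Section Blaschke.
Variable R : realType.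
Local Notation C := R[i].

Definition bnum n (a : 'I_n -> C) : {poly C} := \prod_(k < n) ('X - (a k)%:P).
Definition bden n (a : 'I_n -> C) : {poly C} :=
  \prod_(k < n) (1 - ((a k)^*)%:P * 'X).

Definition blaschke n (alpha : C) (a : 'I_n -> C) (z : C) : C :=
  alpha * ((bnum a).[z] / (bden a).[z]).

(* Its derivative B'(z): B is the rational function alpha * P/Q, so by the quotient rule
   B' = alpha * (P' Q - P Q') / Q^2 (P', Q' formal polynomial derivatives). *)
Definition blaschke' n (alpha : C) (a : 'I_n -> C) (z : C) : C :=
  alpha * (((bnum a)^`().[z] * (bden a).[z] - (bnum a).[z] * (bden a)^`().[z])
           / ((bden a).[z] ^+ 2)).

Definition is_blaschke_data n (alpha : C) (a : 'I_n -> C) : Prop :=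
  `|alpha| = 1 /\ (forall k, `|a k| < 1).

End Blaschke.

From HB Require Import structures.
From mathcomp Require Import all_boot all_order all_algebra.
From mathcomp Require Import complex.
From mathcomp Require Import reals.
From mathcomp Require Import ring lra.
Import Order.TTheory GRing.Theory Num.Theory.
Local Open Scope ring_scope.
Local Open Scope complex_scope.

(* On the unit circle the derivative of a finite Blaschke product
   has the classical Poisson-kernel form
       |B'(z)| = sum_k (1 - |a_k|^2) / |z - a_k|^2        (|z| = 1),
   obtained from the logarithmic derivative of P/Q and the identity
   1 - conj(a) z = z * conj(z - a) valid for |z| = 1.  A zero a_k = 0
   contributes exactly 1 to this sum.  We take the three zeros -2/5, 2i/5,
   -2i/5 and n - 3 zeros at the origin, so that
       |B'(x + iy)| = T(x, y) + (n - 3),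
   where T is the sum of the three remaining Poisson terms.  An elementary
   real estimate gives T <= 4 on the circle (hence M(B) <= n + 1), while
   T(1, 0) = 381/203 < 2 (hence m(B) < n - 1). *)

Lemma horner_deriv_prod (F : fieldType) (n : nat) (P : 'I_n -> {poly F}) (z : F) :
  (forall k, (P k).[z] != 0) ->
  (\prod_(k < n) P k)^`().[z] =
  (\prod_(k < n) P k).[z] * \sum_(k < n) (P k)^`().[z] / (P k).[z].
Proof.
elim: n P => [|n IH] P P0.
  by rewrite !big_ord0 mulr0 -polyC1 derivC horner0.
rewrite !big_ord_recr /= derivM hornerD !hornerM IH // mulrDr.
congr (_ + _); first by rewrite mulrAC.
by rewrite -mulrA [_ * (_ / _)]mulrC divfK.
Qed.

Section Poisson.
Context {R : realType}.
Local Notation C := R[i].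

Definition poisson (a z : C) : C := (1 - `|a| ^+ 2) / `|z - a| ^+ 2.

Lemma poisson0 (z : C) : `|z| = 1 -> poisson 0 z = 1.
Proof. by move=> hz; rewrite /poisson normr0 expr0n /= !subr0 hz expr1n divr1. Qed.

Lemma poisson_circle (p q x y : R) : x ^+ 2 + y ^+ 2 = 1 ->
  poisson (p +i* q) (x +i* y) =
  ((1 - (p ^+ 2 + q ^+ 2)) / (1 + (p ^+ 2 + q ^+ 2) - 2 * (x * p + y * q)))%:C.
Proof.
move=> hxy; rewrite /poisson -!add_Re2_Im2 /= rmorphM fmorphV rmorphB rmorph1.
congr (_ * (_ %:C)^-1).
by rewrite -{1}hxy; ring.
Qed.

(* For z on the circle the factor 1 - conj(a) z of the denominator is
   z * conj(z - a); in particular it has the same modulus as z - a. *)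
Lemma den_factor_circle (a z : C) : `|z| = 1 -> 1 - a^* * z = z * (z - a)^*.
Proof.
by move=> hz; rewrite rmorphB /= mulrBr -normCK hz expr1n mulrC.
Qed.

Lemma log_deriv_factor_circle (a z : C) : `|z| = 1 -> `|a| < 1 ->
  (z - a)^-1 - - a^* / (1 - a^* * z) = z^-1 * poisson a z.
Proof.
move=> hz ha.
have z0 : z != 0 by rewrite -normr_eq0 hz oner_eq0.
have za0 : z - a != 0.
  by rewrite subr_eq0; apply: contraTneq ha => <-; rewrite hz ltxx.
have zac0 : z^* - a^* != 0 by rewrite -rmorphB conjc_eq0.
have zzc : z * z^* = 1 by rewrite -normCK hz expr1n.
rewrite den_factor_circle // /poisson !normCK -{1}zzc !rmorphB /=.
by field; rewrite zac0 za0 z0.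
Qed.

Lemma norm_blaschke'_circle n (alpha : C) (a : 'I_n -> C) (z : C) :
  is_blaschke_data alpha a -> `|z| = 1 ->
  `|blaschke' alpha a z| = \sum_(k < n) poisson (a k) z.
Proof.
move=> [halpha ha] hz.
have z0 : z != 0 by rewrite -normr_eq0 hz oner_eq0.
have num0 k : z - a k != 0.
  by rewrite subr_eq0; apply: contraTneq (ha k) => <-; rewrite hz ltxx.
have den0 k : 1 - (a k)^* * z != 0.
  by rewrite den_factor_circle // mulf_neq0 ?conjc_eq0.
have eP : (bnum a).[z] = \prod_(k < n) (z - a k).
  by rewrite /bnum horner_prod; apply: eq_bigr => k _; rewrite hornerXsubC.
have eQ : (bden a).[z] = \prod_(k < n) (1 - (a k)^* * z).
  by rewrite /bden horner_prod; apply: eq_bigr => k _; rewrite !hornerE.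
have P0 : (bnum a).[z] != 0 by rewrite eP; apply/prodf_neq0.
have Q0 : (bden a).[z] != 0 by rewrite eQ; apply/prodf_neq0.
have dP : (bnum a)^`().[z] = (bnum a).[z] * \sum_(k < n) (z - a k)^-1.
  rewrite /bnum horner_deriv_prod => [|k]; last by rewrite hornerXsubC.
  by congr (_ * _); apply: eq_bigr => k _; rewrite derivXsubC hornerXsubC hornerC mul1r.
have dQ : (bden a)^`().[z] =
    (bden a).[z] * \sum_(k < n) - (a k)^* / (1 - (a k)^* * z).
  rewrite /bden horner_deriv_prod => [|k]; last by rewrite !hornerE.
  congr (_ * _); apply: eq_bigr => k _.
  by rewrite derivB -polyC1 derivC deriv_mulC derivX !hornerE.
have normPQ : `|(bnum a).[z]| = `|(bden a).[z]|.
  rewrite eP eQ !normr_prod; apply: eq_bigr => k _.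
  by rewrite den_factor_circle // normrM hz mul1r normcJ.
have -> : blaschke' alpha a z =
    alpha * ((bnum a).[z] / (bden a).[z]) * (z^-1 * \sum_(k < n) poisson (a k) z).
  rewrite mulr_sumr -(eq_bigr _ (fun k _ => log_deriv_factor_circle _ _ hz (ha k))).
  by rewrite sumrB /blaschke' dP dQ; field.
rewrite !normrM normfV normPQ mulfV ?normr_eq0 // halpha normfV hz invr1 !mul1r.
apply/ger0_norm/sumr_ge0 => k _; apply: divr_ge0; last exact: exprn_ge0.
by rewrite subr_ge0 exprn_ile1 // ltW.
Qed.

End Poisson.

(* The sum of the Poisson kernels of -2/5, 2i/5 and -2i/5 at the point x + iy
   of the unit circle (each numerator is 1 - 4/25 = 21/25). *)
Definition three_nodes {R : realFieldType} (x y : R) : R :=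
  21/25 / (29/25 + 4/5 * x) + 21/25 / (29/25 - 4/5 * y) + 21/25 / (29/25 + 4/5 * y).

(* The key real estimate: on the unit circle the three kernels add up to at
   most 4.  After clearing denominators (using y^2 = 1 - x^2) this reduces to
   a polynomial inequality in x on [-1, 1]. *)
Lemma three_nodes_le4 (R : realFieldType) (x y : R) :
  x ^+ 2 + y ^+ 2 = 1 -> three_nodes x y <= 4.
Proof.
move=> hxy; rewrite /three_nodes.
have hx : -1 <= x by nra.
have [hy1 hy2] : -1 <= y /\ y <= 1 by split; nra.
set d1 := 29/25 + 4/5 * x; set d2 := 29/25 - 4/5 * y; set d3 := 29/25 + 4/5 * y.
have d1_gt0 : 0 < d1 by rewrite /d1; lra.
have d2_gt0 : 0 < d2 by rewrite /d2; lra.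
have d3_gt0 : 0 < d3 by rewrite /d3; lra.
have -> : 21/25 / d1 + 21/25 / d2 + 21/25 / d3 =
    21/25 * (d2 * d3 + d1 * (d2 + d3)) / (d1 * (d2 * d3)).
  by field; rewrite !gt_eqF.
have d23 : d2 * d3 = 841/625 - 16/25 * (1 - x ^+ 2) by rewrite /d2 /d3; nra.
have sum23 : d2 + d3 = 58/25 by rewrite /d2 /d3; lra.
rewrite ler_pdivrMr ?mulr_gt0 // d23 sum23 /d1.
have : 0 <= (x + 1) * x ^+ 2 by rewrite mulr_ge0 ?sqr_ge0 //; lra.
have : 0 <= (x + 91/100) ^+ 2 by apply: sqr_ge0.
nra.
Qed.

(* At z = 1 the three kernels add up to 3/7 + 2 * 21/29 = 381/203 < 2. *)
Lemma three_nodes_at1 (R : realFieldType) : three_nodes (1 : R) 0 = 381/203.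
Proof. by rewrite /three_nodes; field. Qed.

Section Nodes.
Context {R : realType}.
Local Notation C := R[i].

Definition node (k : nat) : C :=
  if k == 0%N then - (2/5) +i* 0
  else if k == 1%N then 0 +i* (2/5)
  else if k == 2%N then 0 +i* - (2/5)
  else 0.

Lemma node_in_disc (k : nat) : `|node k| < 1.
Proof.
rewrite -(expr_lt1 (n := 2)) // -add_Re2_Im2 /node.
by case: ifP => _; last case: ifP => _; last case: ifP => _; rewrite /= ltcR; lra.
Qed.

Lemma circle_coord (x y : R) : `|x +i* y| = 1 -> x ^+ 2 + y ^+ 2 = 1.
Proof.
move=> hz; have : `|x +i* y| ^+ 2 = 1 by rewrite hz expr1n.
by rewrite -add_Re2_Im2 /= => /complexI.
Qed.

Lemma poisson_nodes_circle (m : nat) (x y : R) : x ^+ 2 + y ^+ 2 = 1 ->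
  \sum_(k < m.+3) poisson (node k) (x +i* y) = (three_nodes x y + m%:R)%:C.
Proof.
move=> hxy.
have hz : `|x +i* y| = 1.
  by apply/eqP; rewrite -(@pexpr_eq1 _ _ 2) // -add_Re2_Im2 /= hxy.
rewrite -(big_mkord xpredT (fun k => poisson (node k) (x +i* y))).
rewrite big_ltn // big_ltn // big_ltn // rmorphD rmorph_nat.
have -> : \sum_(3 <= k < m.+3) poisson (node k) (x +i* y) = m%:R.
  rewrite big_nat_cond (eq_bigr (fun => 1)) => [|k /andP[/andP[k3 _] _]].
    by rewrite -big_nat_cond sumr_const_nat !subSS subn0.
  by case: k k3 => [|[|[|k]]] // _; rewrite /node poisson0.
rewrite !addrA /node /= !poisson_circle // /three_nodes !rmorphD.
by congr (_ + _ + _ + _); congr (_ %:C); congr (_ / _); field.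
Qed.

End Nodes.

Theorem mainTheorem5 (R : realType) (n : nat) (hn : (2 < n)%N) :
  exists (alpha : R[i]) (a : 'I_n -> R[i]),
    is_blaschke_data alpha a /\
    (forall z : R[i], `|z| = 1 -> `|blaschke' alpha a z| <= n.+1%:R) /\
    (exists z : R[i], `|z| = 1 /\ `|blaschke' alpha a z| < n.-1%:R).
Proof.
case: n hn => [|[|[|m]]] // _.
have data : is_blaschke_data (1 : R[i]) (fun k : 'I_m.+3 => node k).
  by split=> [|k]; [exact: normr1 | exact: node_in_disc].
have natC (k : nat) : (k%:R : R[i]) = (k%:R : R)%:C by rewrite rmorph_nat.
exists 1, (fun k => node k); split=> //; split.
  case=> x y hz; have hxy := circle_coord _ _ hz.
  rewrite norm_blaschke'_circle // poisson_nodes_circle // natC lecR.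
  by rewrite -addn4 natrD addrC lerD2l three_nodes_le4.
exists (1 +i* 0); split; first exact: normr1.
rewrite norm_blaschke'_circle //; last exact: normr1.
rewrite poisson_nodes_circle ?expr1n ?expr0n ?addr0 // natC ltcR three_nodes_at1.
have -> : m.+3.-1 = (m + 2)%N by rewrite addn2.
by rewrite natrD addrC ltrD2l; lra.
Qed.
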